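(* Let $S_\alpha=(\mathrm{Id}_n+W_\alpha V_\alpha)\cdots(\mathrm{Id}_n+W_1V_1)Z$ for $1\le\alpha\le d$ and $k\ge1$. With the convention $\dot F=\{H,F\}$ and $H=\operatorname{tr}S_\alpha^k$, the vector field on $\mathcal M^\times_{n,d,q}$ induced by the quasi-Poisson bracket is $\dot X=-kXS_\alpha^k$, $\dot Z=k(S_\alpha^kZ-ZS_\alpha^k)$, $\dot V_\beta=-kV_\beta S_\alpha^k$ and $\dot W_\beta=kS_\alpha^kW_\beta$ for $\beta\le\alpha$, $\dot V_\beta=0$ and $\dot W_\beta=0$ for $\beta>\alpha$; moreover $\dot S_\alpha=0$.
   Context: Fix integers $n\ge1$, $d\ge1$ and $q\in\mathbb C^\times$ not a root of unity. Greek indices range over $\{1,\dots,d\}$; set $o(\alpha,\beta)=0$ if $\alpha=\beta$, $o(\alpha,\beta)=1$ if $\alpha<\beta$, $o(\alpha,\beta)=-1$ if $\alpha>\beta$. Let $\mathcal M^\times_{n,d,q}$ be the affine variety of tuples $(X,Z,V_1,\dots,V_d,W_1,\dots,W_d)$ with $X,Z\in\mathrm{GL}_n(\mathbb C)$, $V_\alpha\in\mathrm{Mat}_{1\times n}(\mathbb C)$, $W_\alpha\in\mathrm{Mat}_{n\times 1}(\mathbb C)$, such that every $\mathrm{Id}_n+W_\alpha V_\alpha$ is invertible and $XZX^{-1}Z^{-1}(\mathrm{Id}_n+W_1V_1)^{-1}\cdots(\mathrm{Id}_n+W_dV_d)^{-1}=q\,\mathrm{Id}_n$. Write $V_{\alpha,j}$,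 $W_{\alpha,k}$ for the entries. Let $\{-,-\}$ be the antisymmetric biderivation on functions of $(X,Z,V_\alpha,W_\alpha)$ (Van den Bergh's quasi-Poisson bracket) given by $\{X_{ij},X_{kl}\}=\tfrac12(\delta_{il}(X^2)_{kj}-\delta_{kj}(X^2)_{il})$, $\{Z_{ij},Z_{kl}\}=\tfrac12(\delta_{kj}(Z^2)_{il}-\delta_{il}(Z^2)_{kj})$, $\{X_{ij},Z_{kl}\}=\tfrac12((ZX)_{kj}\delta_{il}+\delta_{kj}(XZ)_{il}+Z_{kj}X_{il}-X_{kj}Z_{il})$, $\{U_{ij},W_{\alpha,k}\}=\tfrac12(\delta_{kj}(UW_\alpha)_i-U_{kj}W_{\alpha,i})$, $\{U_{ij},V_{\alpha,l}\}=\tfrac12((V_\alpha U)_j\delta_{il}-V_{\alpha,j}U_{il})$ for $U\in\{X,Z\}$, $\{V_{\alpha,j},V_{\beta,l}\}=\tfrac12 o(\beta,\alpha)(V_{\beta,j}V_{\alpha,l}+V_{\alpha,j}V_{\beta,l})$, $\{W_{\alpha,i},W_{\beta,k}\}=\tfrac12 o(\beta,\alpha)(W_{\beta,k}W_{\alpha,i}+W_{\alpha,k}W_{\beta,i})$, $\{V_{\alpha,j},W_{\beta,k}\}=\delta_{\alpha\beta}(\delta_{kj}+\tfrac12W_{\alpha,k}V_{\alpha,j}+\tfrac12\delta_{kj}V_\alpha W_\alpha)+\tfrac12 o(\alpha,\beta)(\delta_{kj}V_\alpha W_\beta+W_{\beta,k}V_{\alpha,j})$. The vector field of $H$ is $\dot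 M_{ij}=\{H,M_{ij}\}$ for each matrix entry $M_{ij}$. *)

From HB Require Import structures.
From mathcomp Require Import all_boot all_order all_algebra.
Set Implicit Arguments. Unset Strict Implicit. Unset Printing Implicit Defensive.
Import Order.TTheory GRing.Theory Num.Theory.
Local Open Scope ring_scope.

(* A point (X, Z, V_1..V_d, W_1..W_d) with entries in a commutative ring T.
   Greek indices 1..d are represented by 'I_d (0-based, same order). *)
Record pt (T : comNzRingType) (n d : nat) := Pt {
  pX : 'M[T]_n; pZ : 'M[T]_n;
  pV : 'I_d -> 'rV[T]_n; pW : 'I_d -> 'cV[T]_n }.

Definition coord (n d : nat) : finType :=
  (((('I_n * 'I_n) + ('I_n * 'I_n)) + ('I_d * 'I_n)) + ('I_d * 'I_n))%type.
Definition cX n d (i j : 'I_n) : coord n d := inl (inl (inl (i, j))).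
Definition cZ n d (i j : 'I_n) : coord n d := inl (inl (inr (i, j))).
Definition cV n d (a : 'I_d) (j : 'I_n) : coord n d := inl (inr (a, j)).
Definition cW n d (a : 'I_d) (k : 'I_n) : coord n d := inr (a, k).
Arguments cX {n d}. Arguments cZ {n d}. Arguments cV {n d}. Arguments cW {n d}.

Definition coordv (T : comNzRingType) n d (P : pt T n d) (c : coord n d) : T :=
  match c with
  | inl (inl (inl (i, j))) => pX P i j
  | inl (inl (inr (i, j))) => pZ P i j
  | inl (inr (a, j)) => pV P a 0 j
  | inr (a, k) => pW P a k 0
  end.

Definition mxpow (T : comNzRingType) n (A : 'M[T]_n) (k : nat) : 'M[T]_n :=
  iter k (mulmx A) 1%:M.

Definition IWV (T : comNzRingType) n d (P : pt T n d) (a : 'I_d) : 'M[T]_n :=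
  1%:M + pW P a *m pV P a.

(* S_a = (Id + W_a V_a) ... (Id + W_1 V_1) Z *)
Definition Smx (T : comNzRingType) n d (P : pt T n d) (a : 'I_d) : 'M[T]_n :=
  foldl (fun acc (b : 'I_d) => IWV P b *m acc) (pZ P) [seq b <- enum 'I_d | (val b <= val a)%N].

Definition in_Mx (R : fieldType) n d (q : R) (P : pt R n d) : Prop :=
  [/\ pX P \in unitmx, pZ P \in unitmx, (forall a, IWV P a \in unitmx) &
   foldl (fun acc (b : 'I_d) => acc *m invmx (IWV P b))
     (pX P *m pZ P *m invmx (pX P) *m invmx (pZ P)) (enum 'I_d) = q%:M ].

(* A polynomial function on points, given uniformly over all commutative rings *)
Definition ptfun n d := forall T : comNzRingType, pt T n d -> T.

Definition shift (R : comNzRingType) n d (P : pt R n d) (c : coord n d)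
  : pt {poly R} n d :=
  Pt (\matrix_(i, j) ((pX P i j)%:P + (if c == cX i j then 'X else 0)))
     (\matrix_(i, j) ((pZ P i j)%:P + (if c == cZ i j then 'X else 0)))
     (fun a => \row_j ((pV P a 0 j)%:P + (if c == cV a j then 'X else 0)))
     (fun a => \col_k ((pW P a k 0)%:P + (if c == cW a k then 'X else 0))).

(* partial derivative dF/dc at P: the coefficient of t in F(P + t e_c) *)
Definition pder (R : comNzRingType) n d (F : ptfun n d) (c : coord n d)
  (P : pt R n d) : R := (F _ (shift P c))`_1.

Definition osgn (R : comNzRingType) d (a b : 'I_d) : R :=
  if (a < b)%N then 1 else if (b < a)%N then -1 else 0.

Definition kd (R : comNzRingType) m (i j : 'I_m) : R := (i == j)%:R.
Arguments kd {R m}. Arguments osgn {R d}.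

(* Van den Bergh's quasi-Poisson bracket on pairs of coordinate functions,
   evaluated at P *)
Definition brc (R : fieldType) n d (P : pt R n d) (c c' : coord n d) : R :=
  let X := pX P in let Z := pZ P in let V := pV P in let W := pW P in
  let h : R := 2^-1 in
  let bUW (U : 'M[R]_n) (i j : 'I_n) (a : 'I_d) (k : 'I_n) : R :=
      h * (kd k j * (U *m W a) i 0 - U k j * W a i 0) in
  let bUV (U : 'M[R]_n) (i j : 'I_n) (a : 'I_d) (l : 'I_n) : R :=
      h * ((V a *m U) 0 j * kd i l - V a 0 j * U i l) in
  let bXZ (i j k l : 'I_n) : R := h * ((Z *m X) k j * kd i l + kd k j * (X *m Z) i l
                          + Z k j * X i l - X k j * Z i l) in
  let bVW (a : 'I_d) (j : 'I_n) (b : 'I_d) (k : 'I_n) : R := kd a b * (kd k j + h * W a k 0 * V a 0 j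
                                + h * kd k j * (V a *m W a) 0 0)
                     + h * osgn a b * (kd k j * (V a *m W b) 0 0
                                        + W b k 0 * V a 0 j) in
  match c, c' with
  | inl (inl (inl (i, j))), inl (inl (inl (k, l))) =>
      h * (kd i l * (X *m X) k j - kd k j * (X *m X) i l)
  | inl (inl (inr (i, j))), inl (inl (inr (k, l))) =>
      h * (kd k j * (Z *m Z) i l - kd i l * (Z *m Z) k j)
  | inl (inl (inl (i, j))), inl (inl (inr (k, l))) => bXZ i j k l
  | inl (inl (inr (k, l))), inl (inl (inl (i, j))) => - bXZ i j k l
  | inl (inl (inl (i, j))), inr (a, k) => bUW X i j a k
  | inr (a, k), inl (inl (inl (i, j))) => - bUW X i j a k
  | inl (inl (inr (i, j))), inr (a, k) => bUW Z i j a k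
  | inr (a, k), inl (inl (inr (i, j))) => - bUW Z i j a k
  | inl (inl (inl (i, j))), inl (inr (a, l)) => bUV X i j a l
  | inl (inr (a, l)), inl (inl (inl (i, j))) => - bUV X i j a l
  | inl (inl (inr (i, j))), inl (inr (a, l)) => bUV Z i j a l
  | inl (inr (a, l)), inl (inl (inr (i, j))) => - bUV Z i j a l
  | inl (inr (a, j)), inl (inr (b, l)) =>
      h * osgn b a * (V b 0 j * V a 0 l + V a 0 j * V b 0 l)
  | inr (a, i), inr (b, k) =>
      h * osgn b a * (W b k 0 * W a i 0 + W a k 0 * W b i 0)
  | inl (inr (a, j)), inr (b, k) => bVW a j b k
  | inr (b, k), inl (inr (a, j)) => - bVW a j b k
  end.

(* {F, G}(P) for polynomial functions F, G, extended as a biderivation *)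
Definition qpb (R : fieldType) n d (F G : ptfun n d) (P : pt R n d) : R :=
  \sum_(c : coord n d) \sum_(c' : coord n d)
     pder F c P * pder G c' P * brc P c c'.

Definition cfun n d (c : coord n d) : ptfun n d := fun T P => coordv P c.

Definition Ham n d (a : 'I_d) (k : nat) : ptfun n d :=
  fun T P => \tr (mxpow (Smx P a) k).

Definition Sentry n d (a : 'I_d) (i j : 'I_n) : ptfun n d :=
  fun T P => Smx P a i j.

From Pilot Require Import Defs.
From HB Require Import structures.
From mathcomp Require Import all_boot all_order all_algebra.
From mathcomp Require Import ring.
Import Order.TTheory GRing.Theory Num.Theory.
Set Implicit Arguments. Unset Strict Implicit. Unset Printing Implicit Defensive.
Local Open Scope ring_scope.

(* Partial derivatives are coefficients of t in F(P + t e_c), so we compute with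
   matrices over R[t] up to first order (coef0_mx, coef1_mx).
   1. S_a = F_a ... F_0 Z is a left-folded product of the factors
      F_b = 1 + W_b V_b; its derivative in a direction T follows from the
      Leibniz rule along the fold (S_tangent), and d tr S^k = k tr (dS S^(k-1)).
   2. Derivatives are linear in the direction, so {H, c0} = k tr (dS S^(k-1))
      with dS taken in the single direction c |-> {c, c0} (ham_dir c0), and
      {H, S_ij} is the (i, j) entry of dS in the direction c |-> {H, c}.
   3. Gauge telescoping: if dF_b = B_(b+1) F_b - F_b B_b and dZ = B_0 Z - Z B',
      then dS = B_(a+1) S - S B', hence {H, c0} = k tr (S^k (B_(a+1) - B')).
   4. For each coordinate c0 the entries of the bracket provide such gauges
      (built from elementary matrices), which yields the formulas for X, Z, V_b,
      W_b; fed back into step 3 with the constant gauge k S^k they give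
      dS = [k S^k, S] = 0. *)

(* vector.v also defines a [coord]; we mean the coordinates of Defs. *)
Local Notation coord := Defs.coord.

Section FirstOrder.
Variable R : comNzRingType.

Definition coef0_mx p q (A : 'M[{poly R}]_(p, q)) : 'M[R]_(p, q) :=
  \matrix_(i, j) (A i j)`_0.
Definition coef1_mx p q (A : 'M[{poly R}]_(p, q)) : 'M[R]_(p, q) :=
  \matrix_(i, j) (A i j)`_1.

Lemma coef0_mxD p q (A B : 'M[{poly R}]_(p, q)) :
  coef0_mx (A + B) = coef0_mx A + coef0_mx B.
Proof. by apply/matrixP=> i j; rewrite !mxE coefD. Qed.

Lemma coef1_mxD p q (A B : 'M[{poly R}]_(p, q)) :
  coef1_mx (A + B) = coef1_mx A + coef1_mx B.
Proof. by apply/matrixP=> i j; rewrite !mxE coefD. Qed.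

Lemma coef0_mx1 p : coef0_mx (1%:M : 'M[{poly R}]_p) = 1%:M.
Proof. by apply/matrixP=> i j; rewrite !mxE coefMn coefC. Qed.

Lemma coef1_mx1 p : coef1_mx (1%:M : 'M[{poly R}]_p) = 0.
Proof. by apply/matrixP=> i j; rewrite !mxE coefMn coefC mul0rn. Qed.

Lemma coef0_mxM p q r (A : 'M[{poly R}]_(p, q)) (B : 'M[{poly R}]_(q, r)) :
  coef0_mx (A *m B) = coef0_mx A *m coef0_mx B.
Proof.
apply/matrixP=> i j; rewrite !mxE coef_sum; apply: eq_bigr => l _.
by rewrite !mxE coef0M.
Qed.

Lemma coef1_mxM p q r (A : 'M[{poly R}]_(p, q)) (B : 'M[{poly R}]_(q, r)) :
  coef1_mx (A *m B) = coef0_mx A *m coef1_mx B + coef1_mx A *m coef0_mx B.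
Proof.
apply/matrixP=> i j; rewrite !mxE coef_sum -big_split; apply: eq_bigr => l _.
by rewrite !mxE coefM !big_ord_recr big_ord0 /= add0r addrC.
Qed.

(* Value and tangent of the left-folded product f(b_m) ... f(b_1) z, given
   tangents df b of the factors and dz of the initial matrix z. *)
Definition fold_tangent (I : Type) m (f df : I -> 'M[R]_m) (s : seq I)
    (zdz : 'M[R]_m * 'M[R]_m) : 'M[R]_m * 'M[R]_m :=
  foldl (fun p b => (f b *m p.1, f b *m p.2 + df b *m p.1)) zdz s.

Lemma fold_tangent_value (I : Type) m (f df : I -> 'M[R]_m) s z dz :
  (fold_tangent f df s (z, dz)).1 = foldl (fun acc b => f b *m acc) z s.
Proof. by elim: s z dz => [|b s IH] z dz //=; rewrite IH. Qed.

Lemma coef_mx_foldl (I : Type) m (g : I -> 'M[{poly R}]_m) f df s z :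
  (forall b, coef0_mx (g b) = f b) -> (forall b, coef1_mx (g b) = df b) ->
  (coef0_mx (foldl (fun acc b => g b *m acc) z s),
   coef1_mx (foldl (fun acc b => g b *m acc) z s))
  = fold_tangent f df s (coef0_mx z, coef1_mx z).
Proof.
move=> g0 g1; elim: s z => [|b s IH] z //=.
by rewrite IH coef0_mxM coef1_mxM g0 g1.
Qed.

Lemma fold_tangent_lin (I : Type) (J : finType) m (f : I -> 'M[R]_m)
    (y : J -> R) df dfs dzs s z :
  (forall b, df b = \sum_c y c *: dfs c b) ->
  (fold_tangent f df s (z, \sum_c y c *: dzs c)).2
  = \sum_c y c *: (fold_tangent f (dfs c) s (z, dzs c)).2.
Proof.
move=> dfE; elim: s z dzs => [|b s IH] z dzs //=.
have -> : f b *m (\sum_c y c *: dzs c) + df b *m z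
          = \sum_c y c *: (f b *m dzs c + dfs c b *m z).
  rewrite dfE mulmx_sumr mulmx_suml -big_split; apply: eq_bigr => c _.
  by rewrite scalerDr scalemxAr scalemxAl.
exact: IH.
Qed.

Lemma fold_tangent_gauge (I : Type) m (idx : I -> nat) (f df : I -> 'M[R]_m)
    (B : nat -> 'M[R]_m) B' s k z dz :
  map idx s = iota k (size s) ->
  (forall b, (idx b < k + size s)%N ->
     df b = B (idx b).+1 *m f b - f b *m B (idx b)) ->
  dz = B k *m z - z *m B' ->
  (fold_tangent f df s (z, dz)).2
  = B (k + size s)%N *m (fold_tangent f df s (z, dz)).1
    - (fold_tangent f df s (z, dz)).1 *m B'.
Proof.
elim: s k z dz => [|b s IH] k z dz; first by move=> _ _ ->; rewrite addn0.
move=> /= [idx_b idx_s] dfE dzE; rewrite -addSnnS; apply: IH => //.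
  by move=> b' lt_b'; apply: dfE; rewrite addnS -addSn.
rewrite dfE idx_b ?addnS ?ltnS ?leq_addr // dzE.
by rewrite mulmxBr mulmxBl !mulmxA addrC -addrA addKr.
Qed.

End FirstOrder.

Section Powers.
Variables (R : comNzRingType) (n : nat).
Implicit Types A : 'M[R]_n.

Lemma mxpowD A i j : mxpow A (i + j) = mxpow A i *m mxpow A j.
Proof. by elim: i => [|i IH] /=; rewrite ?mul1mx // IH mulmxA. Qed.

Lemma mxpowSr A k : mxpow A k.+1 = mxpow A k *m A.
Proof. by rewrite -addn1 mxpowD /= mulmx1. Qed.

Lemma mxpow_comm A k : A *m mxpow A k = mxpow A k *m A.
Proof. exact: mxpowSr. Qed.

Lemma coef0_mx_pow (M : 'M[{poly R}]_n) k :
  coef0_mx (mxpow M k) = mxpow (coef0_mx M) k.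
Proof. by elim: k => [|k IH] /=; rewrite ?coef0_mx1 // coef0_mxM IH. Qed.

(* Cyclicity of the trace collects the k.+1 Leibniz terms of d(M^(k+1)). *)
Lemma mxtrace_coef1_pow (M : 'M[{poly R}]_n) k j :
  \tr (mxpow (coef0_mx M) j *m coef1_mx (mxpow M k.+1))
  = k.+1%:R * \tr (coef1_mx M *m mxpow (coef0_mx M) (j + k)).
Proof.
set M0 := coef0_mx M; set M1 := coef1_mx M.
elim: k j => [|k IH] j.
  by rewrite /= coef1_mxM coef1_mx1 mulmx0 add0r coef0_mx1 mulmx1 addn0
             mxtrace_mulC mul1r.
rewrite (_ : mxpow M k.+2 = M *m mxpow M k.+1) // coef1_mxM coef0_mx_pow.
rewrite -/M0 -/M1 mulmxDr mxtraceD mulmxA -mxpowSr IH -addSnnS.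
have -> : \tr (mxpow M0 j *m (M1 *m mxpow M0 k.+1))
          = \tr (M1 *m mxpow M0 (j.+1 + k)).
  by rewrite mulmxA mxtrace_mulC mulmxA -mxpowD mxtrace_mulC addSnnS addnC.
by rewrite [in RHS]mulrS mulrDl mul1r addrC.
Qed.

Lemma coef1_mxtrace_pow (M : 'M[{poly R}]_n) k : (0 < k)%N ->
  (\tr (mxpow M k))`_1 = k%:R * \tr (coef1_mx M *m mxpow (coef0_mx M) k.-1).
Proof.
case: k => // k _; rewrite -[RHS]/(_ * \tr (_ *m mxpow _ (0 + k))).
rewrite -mxtrace_coef1_pow mul1mx /mxtrace coef_sum.
by apply: eq_bigr => i _; rewrite [RHS]mxE.
Qed.

End Powers.

Section Tangents.
Variables (R : comNzRingType) (n d : nat).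
Implicit Types (P T : pt R n d) (c : coord n d).

Definition point_of (y : coord n d -> R) : pt R n d :=
  Pt (\matrix_(i, j) y (cX i j)) (\matrix_(i, j) y (cZ i j))
     (fun b => \row_j y (cV b j)) (fun b => \col_k y (cW b k)).

Definition unit_dir c : pt R n d := point_of (fun c' => (c == c')%:R).

Definition factors_upto (a : 'I_d) : seq 'I_d :=
  [seq b <- enum 'I_d | (val b <= val a)%N].

Definition factor_tangent P T (b : 'I_d) : 'M[R]_n :=
  pW T b *m pV P b + pW P b *m pV T b.

Definition S_tangent P T (a : 'I_d) : 'M[R]_n :=
  (fold_tangent (IWV P) (factor_tangent P T) (factors_upto a) (pZ P, pZ T)).2.

Lemma coef0_shift (x : R) (b : bool) : (x%:P + (if b then 'X else 0))`_0 = x.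
Proof. by case: b; rewrite coefD coefC ?coefX ?coef0 ?addr0. Qed.

Lemma coef1_shift (x : R) (b : bool) : (x%:P + (if b then 'X else 0))`_1 = b%:R.
Proof. by case: b; rewrite coefD coefC ?coefX ?coef0 ?add0r. Qed.

Lemma coef0_shiftZ P c : coef0_mx (pZ (shift P c)) = pZ P.
Proof. by apply/matrixP=> i j; rewrite !mxE coef0_shift. Qed.
Lemma coef1_shiftZ P c : coef1_mx (pZ (shift P c)) = pZ (unit_dir c).
Proof. by apply/matrixP=> i j; rewrite !mxE coef1_shift. Qed.
Lemma coef0_shiftV P c b : coef0_mx (pV (shift P c) b) = pV P b.
Proof. by apply/matrixP=> i j; rewrite (ord1 i) !mxE coef0_shift. Qed.
Lemma coef1_shiftV P c b : coef1_mx (pV (shift P c) b) = pV (unit_dir c) b.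
Proof. by apply/matrixP=> i j; rewrite (ord1 i) !mxE coef1_shift. Qed.
Lemma coef0_shiftW P c b : coef0_mx (pW (shift P c) b) = pW P b.
Proof. by apply/matrixP=> i j; rewrite (ord1 j) !mxE coef0_shift. Qed.
Lemma coef1_shiftW P c b : coef1_mx (pW (shift P c) b) = pW (unit_dir c) b.
Proof. by apply/matrixP=> i j; rewrite (ord1 j) !mxE coef1_shift. Qed.

Lemma coef_mx_S_shift P c a :
  (coef0_mx (Smx (shift P c) a), coef1_mx (Smx (shift P c) a))
  = fold_tangent (IWV P) (factor_tangent P (unit_dir c)) (factors_upto a)
                 (pZ P, pZ (unit_dir c)).
Proof.
rewrite /Smx (coef_mx_foldl (f := IWV P) (df := factor_tangent P (unit_dir c))).
- by rewrite coef0_shiftZ coef1_shiftZ.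
- by move=> b; rewrite coef0_mxD coef0_mxM coef0_mx1 coef0_shiftV coef0_shiftW.
by move=> b; rewrite coef1_mxD coef1_mxM coef1_mx1 add0r coef0_shiftV coef0_shiftW
                     coef1_shiftV coef1_shiftW addrC.
Qed.

Lemma coef0_mx_S_shift P c a : coef0_mx (Smx (shift P c) a) = Smx P a.
Proof.
by have /(congr1 fst) /= -> := coef_mx_S_shift P c a; rewrite fold_tangent_value.
Qed.

Lemma coef1_mx_S_shift P c a :
  coef1_mx (Smx (shift P c) a) = S_tangent P (unit_dir c) a.
Proof. by rewrite /S_tangent -coef_mx_S_shift. Qed.

Lemma pder_cfun P c c0 : pder (cfun c0) c P = (c == c0)%:R.
Proof.
rewrite /pder /cfun; case: c0 => [[[[i j]|[i j]]|[b j]]|[b j]] /=;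
by rewrite !mxE coef1_shift.
Qed.

Lemma pder_Ham P a k c : (0 < k)%N ->
  pder (Ham a k) c P
  = k%:R * \tr (S_tangent P (unit_dir c) a *m mxpow (Smx P a) k.-1).
Proof.
move=> k_gt0; rewrite /pder /Ham coef1_mxtrace_pow //.
by rewrite coef1_mx_S_shift coef0_mx_S_shift.
Qed.

Lemma pder_Sentry P a i j c :
  pder (Sentry a i j) c P = S_tangent P (unit_dir c) a i j.
Proof. by rewrite /pder /Sentry -coef1_mx_S_shift mxE. Qed.

Lemma sum_pick (y : coord n d -> R) c0 : \sum_c y c * (c == c0)%:R = y c0.
Proof.
rewrite (bigD1 c0) //= eqxx mulr1 big1 ?addr0 // => c /negbTE ->.
by rewrite mulr0.
Qed.

Lemma sum_unit_dirZ (y : coord n d -> R) :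
  \sum_c y c *: pZ (unit_dir c) = pZ (point_of y).
Proof.
apply/matrixP=> i j; rewrite summxE !mxE -[RHS](sum_pick y).
by apply: eq_bigr => c _; rewrite !mxE.
Qed.

Lemma sum_unit_dirV (y : coord n d -> R) b :
  \sum_c y c *: pV (unit_dir c) b = pV (point_of y) b.
Proof.
apply/matrixP=> i j; rewrite summxE !mxE -[RHS](sum_pick y).
by apply: eq_bigr => c _; rewrite !mxE.
Qed.

Lemma sum_unit_dirW (y : coord n d -> R) b :
  \sum_c y c *: pW (unit_dir c) b = pW (point_of y) b.
Proof.
apply/matrixP=> i j; rewrite summxE !mxE -[RHS](sum_pick y).
by apply: eq_bigr => c _; rewrite !mxE.
Qed.

Lemma S_tangent_lin P a (y : coord n d -> R) :
  \sum_c y c *: S_tangent P (unit_dir c) a = S_tangent P (point_of y) a.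
Proof.
rewrite /S_tangent -sum_unit_dirZ.
rewrite (@fold_tangent_lin _ _ _ _ _ y _ (fun c => factor_tangent P (unit_dir c)))
  // => b.
rewrite /factor_tangent -sum_unit_dirV -sum_unit_dirW mulmx_suml mulmx_sumr.
rewrite -big_split; apply: eq_bigr => c _.
by rewrite scalerDr scalemxAl scalemxAr.
Qed.

Lemma factors_upto_val (a : 'I_d) : map val (factors_upto a) = iota 0 a.+1.
Proof.
have -> : map val (factors_upto a) = [seq x <- map val (enum 'I_d) | (x <= a)%N].
  by rewrite filter_map.
rewrite val_enum_ord.
have -> : iota 0 d = iota 0 a.+1 ++ iota a.+1 (d - a.+1).
  by rewrite -[in iota a.+1 _](add0n a.+1) -iotaD subnKC.
rewrite filter_cat.
rewrite (@eq_in_filter _ _ predT) => [|x]; last by rewrite mem_iota ltnS.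
rewrite filter_predT (@eq_in_filter _ _ pred0) ?filter_pred0 ?cats0 // => x.
by rewrite mem_iota => /andP[lt_ax _]; rewrite leqNgt lt_ax.
Qed.

Lemma size_factors_upto (a : 'I_d) : size (factors_upto a) = a.+1.
Proof. by rewrite -(size_map val) factors_upto_val size_iota. Qed.

End Tangents.

Section BracketOfHam.
Variables (R : fieldType) (n d : nat).
Implicit Types (P : pt R n d) (c : coord n d).

Definition ham_dir P c0 : pt R n d := point_of (fun c => brc P c c0).

Lemma qpb_cfun P (H : ptfun n d) c0 :
  qpb H (cfun c0) P = \sum_c pder H c P * brc P c c0.
Proof.
apply: eq_bigr => c _; rewrite (bigD1 c0) //= pder_cfun eqxx mulr1.
by rewrite big1 ?addr0 // => c' /negbTE ne; rewrite pder_cfun ne mulr0 mul0r.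
Qed.

Lemma qpb_Ham_cfun P a k c0 : (0 < k)%N ->
  qpb (Ham a k) (cfun c0) P
  = k%:R * \tr (S_tangent P (ham_dir P c0) a *m mxpow (Smx P a) k.-1).
Proof.
move=> k_gt0; rewrite qpb_cfun -S_tangent_lin mulmx_suml linear_sum mulr_sumr.
apply: eq_bigr => c _; rewrite pder_Ham // -scalemxAl linearZ /=.
by rewrite mulrCA mulrC mulrA.
Qed.

Lemma qpb_Ham_Sentry P a k i j :
  qpb (Ham a k) (Sentry a i j) P
  = S_tangent P (point_of (fun c => qpb (Ham a k) (cfun c) P)) a i j.
Proof.
rewrite -S_tangent_lin summxE {1}/qpb exchange_big; apply: eq_bigr => c' _.
rewrite mxE qpb_cfun mulr_suml pder_Sentry; apply: eq_bigr => c _.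
by rewrite mulrAC.
Qed.

End BracketOfHam.

Section EntryCalculus.
Variable R : comNzRingType.

Lemma entryD p q (A B : 'M[R]_(p, q)) i j : (A + B) i j = A i j + B i j.
Proof. by rewrite mxE. Qed.
Lemma entryN p q (A : 'M[R]_(p, q)) i j : (- A) i j = - A i j.
Proof. by rewrite mxE. Qed.
Lemma entryZ p q (x : R) (A : 'M[R]_(p, q)) i j : (x *: A) i j = x * A i j.
Proof. by rewrite mxE. Qed.
Lemma entry_col m (f : 'I_m -> R) i j : (\col_k f k) i j = f i.
Proof. by rewrite mxE. Qed.
Lemma entry_row m (f : 'I_m -> R) i j : (\row_k f k) i j = f j.
Proof. by rewrite mxE. Qed.

Lemma entry_rank1 p q (A : 'M[R]_(p, 1)) (B : 'M[R]_(1, q)) i j :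
  (A *m B) i j = A i 0 * B 0 j.
Proof. by rewrite mxE big_ord1. Qed.

Lemma entry_rank1_mul p q r (A : 'M[R]_(p, 1)) (B : 'M[R]_(1, q))
    (C : 'M[R]_(q, r)) i j :
  (A *m B *m C) i j = A i 0 * (B *m C) 0 j.
Proof. by rewrite -mulmxA entry_rank1. Qed.

Lemma entry_mul_delta p q r (M : 'M[R]_(p, q)) (j : 'I_q) (i : 'I_r) k l :
  (M *m delta_mx j i) k l = M k j * (i == l)%:R.
Proof.
rewrite mxE (bigD1 j) //= mxE eqxx eq_sym big1 ?addr0 // => m /negbTE ne_mj.
by rewrite mxE ne_mj mulr0.
Qed.

Lemma entry_delta_mul p q r (N : 'M[R]_(q, r)) (j : 'I_p) (i : 'I_q) k l :
  (delta_mx j i *m N) k l = (k == j)%:R * N i l.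
Proof.
rewrite mxE (bigD1 i) //= mxE eqxx andbT big1 ?addr0 // => m /negbTE ne_mi.
by rewrite mxE ne_mi andbF mul0r.
Qed.

Lemma entry_mul_delta_mul p q r s (M : 'M[R]_(p, q)) (N : 'M[R]_(r, s))
    (j : 'I_q) (i : 'I_r) k l :
  (M *m delta_mx j i *m N) k l = M k j * N i l.
Proof.
rewrite -mulmxA mxE (bigD1 j) //= entry_delta_mul eqxx mul1r big1 ?addr0 //.
by move=> m /negbTE ne_mj; rewrite entry_delta_mul ne_mj mul0r mulr0.
Qed.

Lemma entry_delta_mul_mul p q r s (M : 'M[R]_(q, r)) (N : 'M[R]_(r, s))
    (j : 'I_p) (i : 'I_q) k l :
  (delta_mx j i *m M *m N) k l = (k == j)%:R * (M *m N) i l.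
Proof. by rewrite -mulmxA entry_delta_mul. Qed.

Lemma mxtrace_mul_delta p q (M : 'M[R]_(p, q)) (j : 'I_q) (i : 'I_p) :
  \tr (M *m delta_mx j i) = M i j.
Proof.
rewrite /mxtrace (bigD1 i) //= entry_mul_delta eqxx mulr1 big1 ?addr0 //.
by move=> m ne_mi; rewrite entry_mul_delta eq_sym (negbTE ne_mi) mulr0.
Qed.

Lemma gauge_factor n (A : 'M[R]_n) (W : 'cV[R]_n) (V : 'rV[R]_n) (c t : R) :
  (c *: (A *m W + t *: W)) *m V + W *m (- c *: (V *m A + t *: V))
  = (c *: A) *m (1%:M + W *m V) - (1%:M + W *m V) *m (c *: A).
Proof.
rewrite mulmxDr mulmxDl mulmx1 mul1mx mulmxA -[(W *m V) *m _]mulmxA.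
rewrite -!scalemxAl -!scalemxAr.
by apply/matrixP=> k l; rewrite !(entryD, entryN, entryZ, entry_rank1); ring.
Qed.

Lemma kd_neq m (x y : 'I_m) : x != y -> kd x y = 0 :> R.
Proof. by rewrite /kd => /negbTE ->. Qed.
Lemma kd_eq m (x : 'I_m) : kd x x = 1 :> R.
Proof. by rewrite /kd eqxx. Qed.
Lemma osgn_lt d (x y : 'I_d) : (x < y)%N -> osgn x y = 1 :> R.
Proof. by rewrite /osgn => ->. Qed.
Lemma osgn_gt d (x y : 'I_d) : (y < x)%N -> osgn x y = -1 :> R.
Proof. by rewrite /osgn => lt_yx; rewrite ltnNge (ltnW lt_yx) lt_yx. Qed.
Lemma osgn_eq d (x : 'I_d) : osgn x x = 0 :> R.
Proof. by rewrite /osgn ltnn. Qed.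

End EntryCalculus.

Section Hamiltonian.
Variable R : fieldType.
Hypothesis two_neq0 : (2%:R : R) != 0.
Variables (n d : nat) (P : pt R n d) (a : 'I_d).
Local Notation X := (pX P).
Local Notation Z := (pZ P).
Local Notation V := (pV P).
Local Notation W := (pW P).
Local Notation S := (Smx P a).

Lemma S_tangent_gauge T (B : nat -> 'M[R]_n) B' :
  (forall b : 'I_d, (b <= a)%N ->
     factor_tangent P T b = B b.+1 *m IWV P b - IWV P b *m B b) ->
  pZ T = B 0%N *m Z - Z *m B' ->
  S_tangent P T a = B a.+1 *m S - S *m B'.
Proof.
move=> dF dZ; rewrite /S_tangent.
have := @fold_tangent_gauge _ _ _ val (IWV P) (factor_tangent P T) B B'
  (factors_upto a) 0 _ _ _ _ dZ.
rewrite fold_tangent_value add0n size_factors_upto; apply.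
  exact: factors_upto_val.
by move=> b; rewrite ltnS; apply: dF.
Qed.

Lemma qpb_Ham_gauge k c0 (B : nat -> 'M[R]_n) B' : (0 < k)%N ->
  (forall b : 'I_d, (b <= a)%N ->
     factor_tangent P (ham_dir P c0) b = B b.+1 *m IWV P b - IWV P b *m B b) ->
  pZ (ham_dir P c0) = B 0%N *m Z - Z *m B' ->
  qpb (Ham a k) (cfun c0) P = k%:R * \tr (mxpow S k *m (B a.+1 - B')).
Proof.
case: k => // k _ dF dZ; rewrite qpb_Ham_cfun // (S_tangent_gauge dF dZ) /=.
rewrite mulmxBl mulmxBr !raddfB /=; congr (_ * (_ - _)).
  by rewrite -mulmxA mxtrace_mulC.
by rewrite mxtrace_mulC mulmxA -mxpowSr.
Qed.

Local Ltac mx_expand :=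
  do 3 rewrite ?(mulmxDl, mulmxDr, mulmxBl, mulmxBr, mulmxN, mulNmx, mulmx1,
                 mul1mx) -?scalemxAl -?scalemxAr ?mulmxA.
Local Ltac mx_entries :=
  rewrite ?(entryD, entryN, entryZ, entry_mul_delta_mul, entry_delta_mul_mul,
            entry_mul_delta, entry_delta_mul, entry_rank1_mul,
            entry_rank1) /kd.
Local Ltac entrywise := mx_expand; mx_entries; field; exact: two_neq0.

Lemma half_add : 2^-1 + 2^-1 = 1 :> R.
Proof. by field; exact: two_neq0. Qed.

Lemma factor_tangent_const T b (A : 'M[R]_n) (c t : R) :
  pW T b = c *: (A *m W b + t *: W b) -> pV T b = - c *: (V b *m A + t *: V b) ->
  factor_tangent P T b = (c *: A) *m IWV P b - IWV P b *m (c *: A).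
Proof. by rewrite /factor_tangent => -> ->; exact: gauge_factor. Qed.

(* Step 4, the coordinates X_ij: with E = delta_mx j i, the gauge is
   -(1/2)[E, X] on the left and -(1/2)[E, X] + E X on the right. *)
Lemma qpb_Ham_X k (i j : 'I_n) : (0 < k)%N ->
  qpb (Ham a k) (cfun (cX i j)) P = - k%:R * (X *m mxpow S k) i j.
Proof.
set E : 'M[R]_n := delta_mx j i; set A := E *m X - X *m E.
move=> k_gt0.
rewrite (@qpb_Ham_gauge k _ (fun _ => - 2^-1 *: A) (- 2^-1 *: A + E *m X)) //.
- rewrite opprD addrA subrr add0r mulmxN linearN /= mulmxA mxtrace_mulC mulmxA.
  by rewrite mxtrace_mul_delta mulrN mulNr.
- move=> b _; apply: (factor_tangent_const (t := 0)).
  + by apply/matrixP=> k' l; rewrite (ord1 l) /= mxE /brc /= /A /E; entrywise.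
  + by apply/matrixP=> k' l; rewrite (ord1 k') /= mxE /brc /= /A /E; entrywise.
by apply/matrixP=> k' l; rewrite /= mxE /brc /= /A /E; entrywise.
Qed.

(* The coordinates Z_ij: gauge -(1/2)[E, Z], and 1/2 [E, Z] on the right. *)
Lemma qpb_Ham_Z k (i j : 'I_n) : (0 < k)%N ->
  qpb (Ham a k) (cfun (cZ i j)) P
  = k%:R * ((mxpow S k *m Z) i j - (Z *m mxpow S k) i j).
Proof.
set E : 'M[R]_n := delta_mx j i; set A := E *m Z - Z *m E.
move=> k_gt0; rewrite (@qpb_Ham_gauge k _ (fun _ => - 2^-1 *: A) (2^-1 *: A)) //.
- have -> : - 2^-1 *: A - 2^-1 *: A = - A.
    by rewrite -scalerBl -opprD half_add scaleN1r.
  rewrite mulmxN linearN /= /A mulmxBr linearB /= !mulmxA mxtrace_mul_delta.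
  by rewrite mxtrace_mulC mulmxA mxtrace_mul_delta opprB.
- move=> b _; apply: (factor_tangent_const (t := 0)).
  + by apply/matrixP=> k' l; rewrite (ord1 l) /= mxE /brc /= /A /E; entrywise.
  + by apply/matrixP=> k' l; rewrite (ord1 k') /= mxE /brc /= /A /E; entrywise.
by apply/matrixP=> k' l; rewrite /= mxE /brc /= /A /E; entrywise.
Qed.

(* The coordinates V_(b0, j): gauge (1/2) E for the factors up to b0 and
   -(1/2) E after it, with E = e_j V_b0; only the factor b0 breaks the gauge. *)
Lemma qpb_Ham_V k (b0 : 'I_d) (j : 'I_n) : (0 < k)%N ->
  qpb (Ham a k) (cfun (cV b0 j)) P
  = if (b0 <= a)%N then - k%:R * (V b0 *m mxpow S k) 0 j else 0.
Proof.
set E : 'M[R]_n := delta_mx j 0 *m V b0.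
set B := fun m => if (m <= b0)%N then 2^-1 *: E else - 2^-1 *: E.
move=> k_gt0; rewrite (@qpb_Ham_gauge k _ B (2^-1 *: E)) // /B.
- case: leqP => _; last by rewrite subrr mulmx0 mxtrace0 mulr0.
  rewrite -scalerBl -opprD half_add scaleN1r mulmxN linearN /= /E !mulmxA.
  by rewrite mxtrace_mulC !mulmxA mxtrace_mul_delta mulrN mulNr.
- move=> b _; case: (ltngtP b b0) => [lt_bb0|lt_b0b|/val_inj ->].
  + apply: (factor_tangent_const (t := V b0 0 j)).
    * apply/matrixP=> k' l; rewrite (ord1 l) /= mxE /brc /= /E osgn_gt //.
      by rewrite kd_neq ?neq_ltn ?lt_bb0 ?orbT //; entrywise.
    * apply/matrixP=> k' l; rewrite (ord1 k') /= mxE /brc /= /E osgn_gt //.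
      by entrywise.
  + apply: (factor_tangent_const (t := V b0 0 j)).
    * apply/matrixP=> k' l; rewrite (ord1 l) /= mxE /brc /= /E osgn_lt //.
      by rewrite kd_neq ?neq_ltn ?lt_b0b //; entrywise.
    * apply/matrixP=> k' l; rewrite (ord1 k') /= mxE /brc /= /E osgn_lt //.
      by entrywise.
  + apply/matrixP=> k' l; rewrite /factor_tangent [LHS]entryD !entry_rank1 /=.
    rewrite entry_col entry_row /brc /= kd_eq osgn_eq /E /IWV.
    by entrywise.
by apply/matrixP=> k' l; rewrite leq0n /= mxE /brc /= /E; entrywise.
Qed.

(* The coordinates W_(b0, i): the mirror image of the V case, E = W_b0 e_i^T. *)
Lemma qpb_Ham_W k (b0 : 'I_d) (i : 'I_n) : (0 < k)%N ->
  qpb (Ham a k) (cfun (cW b0 i)) P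
  = if (b0 <= a)%N then k%:R * (mxpow S k *m W b0) i 0 else 0.
Proof.
set E : 'M[R]_n := W b0 *m delta_mx 0 i.
set B := fun m => if (m <= b0)%N then - 2^-1 *: E else 2^-1 *: E.
move=> k_gt0; rewrite (@qpb_Ham_gauge k _ B (- 2^-1 *: E)) // /B.
- case: leqP => _; last by rewrite subrr mulmx0 mxtrace0 mulr0.
  by rewrite scaleNr opprK -scalerDl half_add scale1r /E mulmxA mxtrace_mul_delta.
- move=> b _; case: (ltngtP b b0) => [lt_bb0|lt_b0b|/val_inj ->].
  + apply: (factor_tangent_const (t := W b0 i 0)).
    * apply/matrixP=> k' l; rewrite (ord1 l) /= mxE /brc /= /E osgn_gt //.
      by entrywise.
    * apply/matrixP=> k' l; rewrite (ord1 k') /= mxE /brc /= /E osgn_lt //.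
      by rewrite kd_neq ?neq_ltn ?lt_bb0 //; entrywise.
  + apply: (factor_tangent_const (t := W b0 i 0)).
    * apply/matrixP=> k' l; rewrite (ord1 l) /= mxE /brc /= /E osgn_lt //.
      by entrywise.
    * apply/matrixP=> k' l; rewrite (ord1 k') /= mxE /brc /= /E osgn_gt //.
      by rewrite kd_neq ?neq_ltn ?lt_b0b ?orbT //; entrywise.
  + apply/matrixP=> k' l; rewrite /factor_tangent [LHS]entryD !entry_rank1 /=.
    rewrite entry_col entry_row /brc /= kd_eq osgn_eq /E /IWV.
    by entrywise.
by apply/matrixP=> k' l; rewrite leq0n /= mxE /brc /= /E; entrywise.
Qed.

(* S_a is conserved: along the field of H every factor and Z are transported
   by the constant gauge k S^k, so dS_a = [k S^k, S_a] = 0. *)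
Lemma qpb_Ham_S k (i j : 'I_n) : (0 < k)%N -> qpb (Ham a k) (Sentry a i j) P = 0.
Proof.
move=> k_gt0; rewrite qpb_Ham_Sentry.
set K := k%:R *: mxpow S k.
rewrite (@S_tangent_gauge _ (fun _ => K) K).
- by rewrite /K -scalemxAl -scalemxAr mxpow_comm subrr mxE.
- move=> b le_ba; apply: (factor_tangent_const (t := 0)).
  + apply/matrixP=> r l; rewrite (ord1 l) /= mxE qpb_Ham_W // le_ba.
    by rewrite !(entryD, entryZ); ring.
  + apply/matrixP=> r l; rewrite (ord1 r) /= mxE qpb_Ham_V // le_ba.
    by rewrite !(entryD, entryZ); ring.
apply/matrixP=> r l; rewrite /= mxE qpb_Ham_Z // /K -scalemxAl -scalemxAr.
by rewrite !(entryD, entryN, entryZ); ring.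
Qed.

End Hamiltonian.

Unset Implicit Arguments.

Theorem mainTheorem15 (R : numClosedFieldType) (n d : nat) (q : R)
  (hn : (0 < n)%N) (hd : (0 < d)%N)
  (hq : q != 0) (hqroot : forall m : nat, (0 < m)%N -> q ^+ m != 1)
  (P : pt R n d) (hP : in_Mx q P) (a : 'I_d) (k : nat) (hk : (0 < k)%N) :
  let H := @Ham n d a k in
  let Sk := mxpow (Smx P a) k in
  [/\ \matrix_(i, j) qpb H (cfun (cX i j)) P = - k%:R *: (pX P *m Sk),
      \matrix_(i, j) qpb H (cfun (cZ i j)) P
        = k%:R *: (Sk *m pZ P - pZ P *m Sk),
      forall b : 'I_d, \row_j qpb H (cfun (cV b j)) P
        = if (b <= a)%N then - k%:R *: (pV P b *m Sk) else 0,
      forall b : 'I_d, \col_i qpb H (cfun (cW b i)) P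
        = if (b <= a)%N then k%:R *: (Sk *m pW P b) else 0
    & \matrix_(i, j) qpb H (Sentry a i j) P = 0 ].
Proof.
have two_neq0 : (2%:R : R) != 0 by rewrite pnatr_eq0.
move=> H Sk; split.
- by apply/matrixP=> i j; rewrite mxE qpb_Ham_X // entryZ.
- by apply/matrixP=> i j; rewrite mxE qpb_Ham_Z // entryZ entryD entryN.
- move=> b; apply/matrixP=> r j; rewrite (ord1 r) mxE qpb_Ham_V //.
  by case: ifP => _; rewrite ?entryZ ?mxE.
- move=> b; apply/matrixP=> i r; rewrite (ord1 r) mxE qpb_Ham_W //.
  by case: ifP => _; rewrite ?entryZ ?mxE.
by apply/matrixP=> i j; rewrite mxE qpb_Ham_S // mxE.
Qed.
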